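(* Let $\mathfrak g$ be a Lie algebra and $r_1,r_2\in\wedge^2\mathfrak g$ skew-symmetric $r$-matrices, with induced triangular Lie bialgebras $(\mathfrak g,[\cdot,\cdot],\delta_1)$ and $(\mathfrak g,[\cdot,\cdot],\delta_2)$, $\delta_i(x)=[x,r_i]$. If $(\phi,\varphi)$ is a weak homomorphism (resp. weak isomorphism) from $r_2$ to $r_1$, then $(\phi,\varphi)$ is a weak homomorphism (resp. weak isomorphism) from the Lie bialgebra $(\mathfrak g,[\cdot,\cdot],\delta_2)$ to $(\mathfrak g,[\cdot,\cdot],\delta_1)$.
   Context: A skew-symmetric $r$-matrix is $r\in\wedge^2\mathfrak g$ with $[r,r]=0$ (Gerstenhaber bracket on $\wedge^\bullet\mathfrak g$); $r^\sharp:\mathfrak g^*\to\mathfrak g$, $\langle r^\sharp\xi,\eta\rangle=\langle r,\xi\otimes\eta\rangle$. The triangular Lie bialgebra has cobracket $\delta(x)=[x,r]\in\wedge^2\mathfrak g$, whose dual Lie algebra structure on $\mathfrak g^*$ is $[\xi,\eta]_r=\mathrm{ad}^*_{r^\sharp\xi}\eta-\mathrm{ad}^*_{r^\sharp\eta}\xi$ with $\langle\mathrm{ad}^*_x\xi,y\rangle=-\langle\xi,[x,y]\rangle$. A weak homomorphism from $r_2$ to $r_1$ is a pair of a Lie algebra homomorphism $\phi:\mathfrak g\to\mathfrak g$ and a linear map $\varphi:\mathfrak g\to\mathfrak g$ with $(\varphi\otimes\mathrm{Id}_{\mathfrak g})(r_1)=(\mathrm{Id}_{\mathfrak g}\otimes\phi)(r_2)$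 and $\varphi[\phi(x),y]=[x,\varphi(y)]$ for all $x,y$; weak isomorphism if $\phi,\varphi$ are also linear isomorphisms. A weak homomorphism from the Lie bialgebra $(\mathfrak g,[\cdot,\cdot],\delta_2)$ to $(\mathfrak g,[\cdot,\cdot],\delta_1)$ is a pair of a Lie algebra homomorphism $\phi:\mathfrak g\to\mathfrak g$ and a linear $\varphi:\mathfrak g\to\mathfrak g$ such that $\varphi^*:(\mathfrak g^*,[\cdot,\cdot]_{r_2})\to(\mathfrak g^*,[\cdot,\cdot]_{r_1})$ is a Lie algebra homomorphism and $\varphi[\phi(x),y]=[x,\varphi(y)]$ for all $x,y\in\mathfrak g$; a weak isomorphism if moreover $\phi,\varphi$ are linear isomorphisms. *)

(* Finite-dimensional Lie algebra g over a field K, modelled in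
   coordinates: g = K^n as row vectors 'rV[K]_n with standard basis e_i, the bracket
   an arbitrary Lie bracket (bilinear, alternating, Jacobi).  g* is also 'rV[K]_n with
   the standard pairing <xi, x> = sum_i xi_i x_i (dual basis).  Tensors in g (x) g are
   n x n matrices t = sum_{ij} t_ij e_i (x) e_j; 3-tensors are functions
   'I_n -> 'I_n -> 'I_n -> K. *)
From HB Require Import structures.
From mathcomp Require Import all_boot all_order all_algebra.
Set Implicit Arguments.
Unset Strict Implicit.
Unset Printing Implicit Defensive.
Import Order.TTheory GRing.Theory Num.Theory.
Local Open Scope ring_scope.

Section LieDefs.
Variables (K : fieldType) (n : nat).
Local Notation V := 'rV[K]_n.

Definition ebas (i : 'I_n) : V := delta_mx 0 i.

Definition lin (f : V -> V) : Prop :=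
  forall (a : K) (x y : V), f (a *: x + y) = a *: f x + f y.

Definition is_lie (br : V -> V -> V) : Prop :=
  [/\ forall z, lin (fun x => br x z),
      forall z, lin (fun y => br z y),
      forall x, br x x = 0 &
      forall x y z, br x (br y z) + br y (br z x) + br z (br x y) = 0].

Definition lie_hom (br1 br2 : V -> V -> V) (f : V -> V) : Prop :=
  lin f /\ forall x y, f (br1 x y) = br2 (f x) (f y).

Definition pair (xi x : V) : K := \sum_(i < n) xi 0 i * x 0 i.

Definition tens (u v : V) : 'M[K]_n := \matrix_(a, b) (u 0 a * v 0 b).

Definition tmap (f g : V -> V) (t : 'M[K]_n) : 'M[K]_n :=
  \sum_(i < n) \sum_(j < n) t i j *: tens (f (ebas i)) (g (ebas j)).

(* skew-symmetric 2-tensors = wedge^2 g (x /\ y := x (x) y - y (x) x) *)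
Definition skew (r : 'M[K]_n) : Prop := r^T = - r.

Definition t3 (x y z : V) (a b c : 'I_n) : K := x 0 a * y 0 b * z 0 c.
Definition wedge3 (x y z : V) (a b c : 'I_n) : K :=
  t3 x y z a b c - t3 x z y a b c - t3 y x z a b c
  + t3 y z x a b c + t3 z x y a b c - t3 z y x a b c.

(* Gerstenhaber (Schouten) bracket of two decomposable bivectors:
   [x1/\x2, y1/\y2] = sum_{i,j} (-1)^{i+j} [xi,yj] /\ x_i^ /\ y_j^ *)
Definition sch22 (br : V -> V -> V) (x1 x2 y1 y2 : V) (a b c : 'I_n) : K :=
  wedge3 (br x1 y1) x2 y2 a b c - wedge3 (br x1 y2) x2 y1 a b c
  - wedge3 (br x2 y1) x1 y2 a b c + wedge3 (br x2 y2) x1 y1 a b c.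

(* [r, r] for skew r = sum_{i<j} r_ij e_i /\ e_j *)
Definition schouten (br : V -> V -> V) (r : 'M[K]_n) (a b c : 'I_n) : K :=
  \sum_(i < n) \sum_(j < n | (i < j)%N) \sum_(k < n) \sum_(l < n | (k < l)%N)
     r i j * r k l * sch22 br (ebas i) (ebas j) (ebas k) (ebas l) a b c.

Definition r_matrix (br : V -> V -> V) (r : 'M[K]_n) : Prop :=
  skew r /\ forall a b c, schouten br r a b c = 0.

(* r^sharp : g* -> g, <r^sharp xi, eta> = <r, xi (x) eta> *)
Definition rsharp (r : 'M[K]_n) (xi : V) : V := xi *m r.

Definition adstar (br : V -> V -> V) (x xi : V) : V :=
  \row_a (- pair xi (br x (ebas a))).

Definition rbr (br : V -> V -> V) (r : 'M[K]_n) (xi eta : V) : V :=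
  adstar br (rsharp r xi) eta - adstar br (rsharp r eta) xi.

Definition dualmap (f : V -> V) (xi : V) : V := \row_a pair xi (f (ebas a)).

Definition weak_hom_r (br : V -> V -> V) (r1 r2 : 'M[K]_n) (phi vphi : V -> V) : Prop :=
  [/\ lie_hom br br phi, lin vphi,
      tmap vphi id r1 = tmap id phi r2 &
      forall x y, vphi (br (phi x) y) = br x (vphi y)].

Definition weak_iso_r br r1 r2 (phi vphi : V -> V) : Prop :=
  [/\ weak_hom_r br r1 r2 phi vphi, bijective phi & bijective vphi].

(* weak homomorphism from the Lie bialgebra (g,[,],delta_2) to (g,[,],delta_1),
   where the dual Lie algebra of delta_i is (g*, [,]_{r_i}) *)
Definition weak_hom_bialg (br : V -> V -> V) (r1 r2 : 'M[K]_n) (phi vphi : V -> V) : Prop :=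
  [/\ lie_hom br br phi, lin vphi,
      lie_hom (rbr br r2) (rbr br r1) (dualmap vphi) &
      forall x y, vphi (br (phi x) y) = br x (vphi y)].

Definition weak_iso_bialg br r1 r2 (phi vphi : V -> V) : Prop :=
  [/\ weak_hom_bialg br r1 r2 phi vphi, bijective phi & bijective vphi].

End LieDefs.

(* In coordinates every linear map f is right multiplication by lin1_mx f, and
   the hypothesis (varphi (x) Id) r1 = (Id (x) phi) r2 reads Mvarphi^T r1 = r2 Mphi.
   Hence r1^# o varphi^* = phi o r2^#.  Dualising varphi [phi x, y] = [x, varphi y]
   gives varphi^* o ad^*_x = ad^*_(phi x) o varphi^*, and the two identities combine
   to show that varphi^* maps [xi, eta]_r2 to [varphi^* xi, varphi^* eta]_r1. *)
From HB Require Import structures.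
From mathcomp Require Import all_boot all_order all_algebra.
Set Implicit Arguments.
Unset Strict Implicit.
Unset Printing Implicit Defensive.
Import GRing.Theory.
Local Open Scope ring_scope.

Section Coordinates.
Variables (K : fieldType) (n : nat).
Local Notation V := 'rV[K]_n.

Lemma lin_mul_rV_lin1 (f : V -> V) : lin f -> forall x, x *m lin1_mx f = f x.
Proof.
move=> linf; exact: (mul_rV_lin1 (HB.pack f (GRing.isLinear.Build K V V *:%R f linf))).
Qed.

Lemma pair_mulmx (xi x : V) : pair xi x = (xi *m x^T) 0 0.
Proof. by rewrite /pair mxE; apply: eq_bigr => i _; rewrite mxE. Qed.

Lemma dualmap_mulmx (f : V -> V) : lin f -> forall xi, dualmap f xi = xi *m (lin1_mx f)^T.
Proof.
move=> linf xi; apply/rowP => a.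
rewrite !mxE pair_mulmx -(lin_mul_rV_lin1 linf) -rowE mxE.
by apply: eq_bigr => j _; rewrite !mxE.
Qed.

Lemma lin_dualmap (f : V -> V) : lin f -> lin (dualmap f).
Proof. by move=> linf a xi eta; rewrite !(dualmap_mulmx linf) mulmxDl scalemxAl. Qed.

Lemma pair_dualmap (f : V -> V) : lin f -> forall xi y, pair (dualmap f xi) y = pair xi (f y).
Proof.
move=> linf xi y.
by rewrite (dualmap_mulmx linf) -(lin_mul_rV_lin1 linf) !pair_mulmx trmx_mul mulmxA.
Qed.

Lemma pair_adstar (br : V -> V -> V) (x : V) : lin (br x) ->
  forall xi y, pair (adstar br x xi) y = - pair xi (br x y).
Proof.
move=> lin_brx xi y; have -> : adstar br x xi = - dualmap (br x) xi.
  by apply/rowP => a; rewrite !mxE.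
by rewrite -(pair_dualmap lin_brx) !pair_mulmx mulNmx mxE.
Qed.

Lemma tmap_mulmx (f g : V -> V) (t : 'M[K]_n) : lin f -> lin g ->
  tmap f g t = (lin1_mx f)^T *m t *m lin1_mx g.
Proof.
move=> linf ling; apply/matrixP => a b.
rewrite /tmap summxE mxE.
under eq_bigr => i _ do rewrite summxE.
under [RHS]eq_bigr => j _ do rewrite mxE big_distrl /=.
rewrite exchange_big /=; apply: eq_bigr => i _; apply: eq_bigr => j _.
by rewrite !mxE mulrA [_ * t j i]mulrC.
Qed.

Lemma lin1_mx_id : lin1_mx (@id V) = 1%:M.
Proof. by apply/matrixP => i j; rewrite !mxE eq_sym. Qed.

Section WeakHomomorphism.
Variables (br : V -> V -> V) (r1 r2 : 'M[K]_n) (phi vphi : V -> V).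
Hypotheses (lin_br : forall x, lin (br x)) (lin_phi : lin phi) (lin_vphi : lin vphi).
Hypothesis tmap_r12 : tmap vphi id r1 = tmap id phi r2.
Hypothesis vphi_br : forall x y, vphi (br (phi x) y) = br x (vphi y).

Lemma lin1_mx_r12 : (lin1_mx vphi)^T *m r1 = r2 *m lin1_mx phi.
Proof.
have lin_id : lin (@id V) by [].
by move: tmap_r12; rewrite (tmap_mulmx _ lin_vphi lin_id) (tmap_mulmx _ lin_id lin_phi)
  lin1_mx_id trmx1 mulmx1 mul1mx.
Qed.

Lemma rsharp_dualmap xi : rsharp r1 (dualmap vphi xi) = phi (rsharp r2 xi).
Proof.
rewrite /rsharp (dualmap_mulmx lin_vphi) -(lin_mul_rV_lin1 lin_phi).
by rewrite -mulmxA lin1_mx_r12 mulmxA.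
Qed.

Lemma dualmap_adstar x eta :
  dualmap vphi (adstar br x eta) = adstar br (phi x) (dualmap vphi eta).
Proof. by apply/rowP => a; rewrite !mxE pair_adstar // pair_dualmap // vphi_br. Qed.

Lemma dualmap_rbr xi eta :
  dualmap vphi (rbr br r2 xi eta) = rbr br r1 (dualmap vphi xi) (dualmap vphi eta).
Proof.
rewrite /rbr !(dualmap_mulmx lin_vphi) mulmxBl -!(dualmap_mulmx lin_vphi).
by rewrite !dualmap_adstar !rsharp_dualmap.
Qed.

End WeakHomomorphism.

Lemma weak_hom_r_bialg (br : V -> V -> V) (r1 r2 : 'M[K]_n) (phi vphi : V -> V) :
  (forall x, lin (br x)) ->
  weak_hom_r br r1 r2 phi vphi -> weak_hom_bialg br r1 r2 phi vphi.
Proof.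
move=> lin_br [hom_phi lin_vphi r12 vphi_br]; split => //; split.
  exact: lin_dualmap.
exact: (dualmap_rbr lin_br hom_phi.1 lin_vphi r12 vphi_br).
Qed.

End Coordinates.

Theorem proposition7p17 (K : fieldType) (n : nat) (br : 'rV[K]_n -> 'rV[K]_n -> 'rV[K]_n)
  (r1 r2 : 'M[K]_n) (phi vphi : 'rV[K]_n -> 'rV[K]_n) :
  is_lie br -> r_matrix br r1 -> r_matrix br r2 ->
  (weak_hom_r br r1 r2 phi vphi -> weak_hom_bialg br r1 r2 phi vphi) /\
  (weak_iso_r br r1 r2 phi vphi -> weak_iso_bialg br r1 r2 phi vphi).
Proof.
move=> [_ lin_br _ _] _ _; split; first exact: weak_hom_r_bialg.
by move=> [/(weak_hom_r_bialg lin_br) ? ? ?].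
Qed.
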